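(* For all complex $q$ with $|q|<1$, \[ \sum_{i,j\geq 0} \frac{q^{4i^2+4ij+2j^2}}{(q;q)_{2i}(q^2;q^2)_j} =\frac{(-q^5,-q^7,q^{12};q^{12})_\infty}{(q^2;q^2)_\infty}, \qquad \sum_{i,j\geq 0} \frac{q^{4i^2+4ij+2j^2+4i+2j}}{(q;q)_{2i+1}(q^2;q^2)_j}=\frac{(-q,-q^{11},q^{12};q^{12})_\infty}{(q^2;q^2)_\infty}. \]
   Context: For $|q|<1$ and $n\in\mathbb{Z}_{\geq0}\cup\{\infty\}$: $(a;q)_0=1$, $(a;q)_n=\prod_{k=0}^{n-1}(1-aq^k)$, $(a;q)_\infty=\prod_{k\geq0}(1-aq^k)$, and $(a_1,\dots,a_m;q)_n=(a_1;q)_n\cdots(a_m;q)_n$. *)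

From Stdlib Require Import Reals.
From Coquelicot Require Import Coquelicot.
Open Scope C_scope.

Fixpoint qpoch (a q : C) (n : nat) : C :=
  match n with
  | O => 1
  | S m => qpoch a q m * (1 - a * q ^ m)
  end.

Definition is_qpoch_inf (a q P : C) : Prop :=
  filterlim (fun n => qpoch a q n) eventually (locally P).

Definition is_seriesC (u : nat -> C) (l : C) : Prop :=
  @is_series C_AbsRing C_NormedModule u l.

(* double series sum_{i,j>=0} a i j = l, read as an absolutely convergent
   double series, computed as the iterated sum  sum_i (sum_j a i j). *)
Definition is_double_seriesC (a : nat -> nat -> C) (l : C) : Prop :=
  exists s : nat -> C,
    (forall i, is_seriesC (fun j => a i j) (s i)) /\ is_seriesC s l
    /\ (exists t : nat -> R,
          (forall i, is_series (fun j => Cmod (a i j)) (t i)) /\ ex_series t).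

From Stdlib Require Import Reals Arith Lia Lra Psatz ClassicalEpsilon.
From Coquelicot Require Import Coquelicot.
Open Scope C_scope.

(* Both identities come from Bailey's lemma in base [p = q^2].  The unit Bailey pair
   relative to [a = 1] (resp. [a = p]) is transformed once with [rho1 = q], [rho2 -> oo]
   and twice with [rho1, rho2 -> oo].  The resulting [beta_N] is the double sum truncated
   at [i + j <= N] and weighted by [1 / (p; p)_(N-i-j)], while the [alpha_r] form a theta
   series in [Q = q^12], which the Jacobi triple product turns into [(-q^5, -q^7, Q; Q)_oo]
   (resp. [(-q, -q^11, Q; Q)_oo]).  Everything is first proved for finite [N]: Bailey's
   lemma reduces to q-Chu-Vandermonde, and the unit pairs and the theta series come from
   a finite triple product with Gaussian binomials.  Letting [N -> oo] with Tannery's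
   theorem then gives the product formula, the weights tending to [1 / (p; p)_oo]. *)

Fixpoint csum (f : nat -> C) (n : nat) : C :=
  match n with O => 0 | S m => csum f m + f m end.

Lemma csum_last f n : csum f (S n) = csum f n + f n.
Proof. reflexivity. Qed.

Lemma csum_ext f g n : (forall k, (k < n)%nat -> f k = g k) -> csum f n = csum g n.
Proof.
  induction n as [|n IH]; intros H; simpl; auto.
  rewrite IH by (intros; apply H; lia). rewrite H by lia. reflexivity.
Qed.

Lemma csum_plus f g n : csum (fun k => f k + g k) n = csum f n + csum g n.
Proof. induction n as [|n IH]; simpl; [|rewrite IH]; ring. Qed.

Lemma csum_mult_l c f n : csum (fun k => c * f k) n = c * csum f n.
Proof. induction n as [|n IH]; simpl; [|rewrite IH]; ring. Qed.

Lemma csum_first f n : csum f (S n) = f 0%nat + csum (fun k => f (S k)) n.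
Proof. induction n as [|n IH]; [simpl; ring|]. rewrite csum_last, IH. simpl. ring. Qed.

Lemma csum_eq0 (f : nat -> C) n : (forall k, (k < n)%nat -> f k = 0) -> csum f n = 0.
Proof.
  intros H. rewrite (csum_ext f (fun _ => 0)) by auto. clear H.
  induction n as [|n IH]; simpl; [reflexivity|]. rewrite IH. ring.
Qed.

Lemma csum_triangle_swap (F : nat -> nat -> C) n :
  csum (fun k => csum (F k) (S k)) (S n) =
  csum (fun r => csum (fun m => F (r + m)%nat r) (S (n - r))) (S n).
Proof.
  induction n as [|n IH]; [simpl; ring|].
  rewrite csum_last, IH.
  rewrite (csum_last (fun r => csum (fun m => F (r + m)%nat r) (S (S n - r))) (S n)).
  rewrite (csum_ext (fun r => csum (fun m => F (r + m)%nat r) (S (S n - r)))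
             (fun r => csum (fun m => F (r + m)%nat r) (S (n - r)) + F (S n) r) (S n)).
  - rewrite csum_plus, Nat.sub_diag. simpl. rewrite Nat.add_0_r. ring.
  - intros k Hk. replace (S n - k)%nat with (S (n - k)) by lia.
    rewrite csum_last. do 3 f_equal. lia.
Qed.

Lemma csum_fold_even f n :
  csum f (S (2 * n)) = f n + csum (fun r => f (n + S r)%nat + f (n - S r)%nat) n.
Proof.
  revert f; induction n as [|n IH]; intros f; [simpl; ring|].
  replace (S (2 * S n)) with (S (S (S (2 * n)))) by lia.
  rewrite csum_last, csum_first, IH, (csum_last _ n).
  rewrite (csum_ext (fun r => f (S n + S r)%nat + f (S n - S r)%nat)
             (fun r => f (S (n + S r)) + f (S (n - S r))) n)
    by (intros k Hk; f_equal; f_equal; lia).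
  replace (S (S (2 * n))) with (S n + S n)%nat by lia.
  rewrite Nat.sub_diag. simpl. ring.
Qed.

Lemma csum_fold_odd f n :
  csum f (S (S (2 * n))) = csum (fun r => f (S n + r)%nat + f (n - r)%nat) (S n).
Proof.
  revert f; induction n as [|n IH]; intros f; [simpl; ring|].
  replace (S (S (2 * S n))) with (S (S (S (S (2 * n))))) by lia.
  rewrite csum_last, csum_first, IH, (csum_last _ (S n)).
  rewrite (csum_ext (fun r => f (S (S n) + r)%nat + f (S n - r)%nat)
             (fun r => f (S (S n + r)) + f (S (n - r))) (S n))
    by (intros k Hk; f_equal; f_equal; lia).
  replace (S (S (S (2 * n)))) with (S (S n) + S n)%nat by lia.
  rewrite Nat.sub_diag. simpl. ring.
Qed.

(** * q-Pochhammer symbols and Gaussian binomials *)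

Lemma Cpow_add_sub (p : C) m N : (m <= N)%nat -> p ^ m * p ^ (N - m) = p ^ N.
Proof. intros H. rewrite <- Cpow_add_r. f_equal. lia. Qed.

Lemma Cpow_opp p m : (- p) ^ m = (- 1) ^ m * p ^ m.
Proof. rewrite <- Cpow_mult_l. f_equal. ring. Qed.

Lemma Cpow_opp1_sqr r : (- 1) ^ r * (- 1) ^ r = 1.
Proof. rewrite <- Cpow_mult_l. replace (-1 * -1) with (RtoC 1) by ring. apply Cpow_1_l. Qed.

Lemma qpoch_S a q n : qpoch a q (S n) = qpoch a q n * (1 - a * q ^ n).
Proof. reflexivity. Qed.

Lemma qpoch_add a q m n : qpoch a q (m + n) = qpoch a q m * qpoch (a * q ^ m) q n.
Proof.
  induction n as [|n IH]; [rewrite Nat.add_0_r; simpl; ring|].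
  rewrite Nat.add_succ_r, !qpoch_S, IH, Cpow_add_r. ring.
Qed.

Lemma qpoch_S_l a q n : qpoch a q (S n) = (1 - a) * qpoch (a * q) q n.
Proof.
  replace (S n) with (1 + n)%nat by lia. rewrite qpoch_add. simpl.
  replace (a * (q * 1)) with (a * q) by ring. ring.
Qed.

Lemma qpoch_0_l q n : qpoch 0 q n = 1.
Proof. induction n as [|n IH]; [reflexivity|]. rewrite qpoch_S, IH. ring. Qed.

Lemma one_sub_neq0 a : (Cmod a < 1)%R -> 1 - a <> 0.
Proof.
  intros H E. assert (a = 1) as -> by (replace a with (1 - (1 - a)) by ring; rewrite E; ring).
  rewrite Cmod_1 in H. lra.
Qed.

Lemma Cmod_pow_le1 q n : (Cmod q <= 1)%R -> (Cmod (q ^ n) <= 1)%R.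
Proof. intros H. rewrite Cmod_pow, <- (pow1 n). apply pow_incr. split; auto. apply Cmod_ge_0. Qed.

Lemma Cmod_pow_lt1 q n : (Cmod q < 1)%R -> (0 < n)%nat -> (Cmod (q ^ n) < 1)%R.
Proof.
  intros Hq Hn. rewrite Cmod_pow. apply pow_lt_1_compat; [split; [apply Cmod_ge_0|]|]; auto.
Qed.

Lemma Cmod_mult_lt1 x y : (Cmod x < 1)%R -> (Cmod y <= 1)%R -> (Cmod (x * y) < 1)%R.
Proof. intros. rewrite Cmod_mult. pose proof (Cmod_ge_0 x). pose proof (Cmod_ge_0 y). nra. Qed.

Lemma Cmod_mult_pow_lt1 x q k : (Cmod x < 1)%R -> (Cmod q <= 1)%R -> (Cmod (x * q ^ k) < 1)%R.
Proof. intros. apply Cmod_mult_lt1, Cmod_pow_le1; auto. Qed.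

Lemma qpoch_neq0 a q n : (Cmod a < 1)%R -> (Cmod q <= 1)%R -> qpoch a q n <> 0.
Proof.
  intros Ha Hq. induction n as [|n IH]; [apply C1_nz|].
  apply Cmult_neq_0; auto. apply one_sub_neq0, Cmod_mult_pow_lt1; auto.
Qed.

(* [tri m = m (m - 1) / 2], so that [(a;q)_m] has top coefficient [(-a)^m q^(tri m)]. *)
Fixpoint tri (m : nat) : nat := match m with O => O | S k => (tri k + k)%nat end.

Lemma tri_double m : (2 * tri m + m = m * m)%nat.
Proof. induction m; simpl; lia. Qed.

Lemma tri_add r m : tri (r + m) = (tri r + tri m + r * m)%nat.
Proof.
  pose proof (tri_double r); pose proof (tri_double m); pose proof (tri_double (r + m)). nia.
Qed.

(* The homogeneous Pochhammer symbol [prod_(k<m) (u - s p^k)]; unlike [(s/u; p)_m] it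
   makes sense for [u = 0], which encodes a Bailey parameter sent to infinity. *)
Fixpoint hqpoch (u s p : C) (m : nat) : C :=
  match m with O => 1 | S k => hqpoch u s p k * (u - s * p ^ k) end.

Lemma hqpoch_S_l u s p m : hqpoch u s p (S m) = (u - s) * hqpoch u (s * p) p m.
Proof.
  induction m as [|m IH]; [simpl; ring|].
  change (hqpoch u s p (S (S m))) with (hqpoch u s p (S m) * (u - s * p ^ S m)).
  rewrite IH. simpl. ring.
Qed.

Lemma hqpoch_add u s p r m : hqpoch u s p (r + m) = hqpoch u s p r * hqpoch u (s * p ^ r) p m.
Proof.
  induction m as [|m IH]; [rewrite Nat.add_0_r; simpl; ring|].
  rewrite Nat.add_succ_r. simpl. rewrite IH, Cpow_add_r. ring.
Qed.

Lemma hqpoch_0_l s p k : hqpoch 0 s p k = (- s) ^ k * p ^ tri k.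
Proof. induction k as [|k IH]; [simpl; ring|]. simpl. rewrite IH, Cpow_add_r. ring. Qed.

Lemma hqpoch_0_m u p k : hqpoch u 0 p k = u ^ k.
Proof. induction k as [|k IH]; [reflexivity|]. simpl. rewrite IH. ring. Qed.

Lemma hqpoch_scale c x p k : hqpoch c (c * x) p k = c ^ k * qpoch x p k.
Proof. induction k as [|k IH]; [simpl; ring|]. simpl. rewrite IH. ring. Qed.

Definition qbinom (Q : C) (N k : nat) : C :=
  if (k <=? N)%nat then qpoch Q Q N / (qpoch Q Q k * qpoch Q Q (N - k)) else 0.

Section Gaussian_binomials.
Variable Q : C.
Hypothesis HQ : (Cmod Q < 1)%R.

Let qpoch_QQ_neq0 n : qpoch Q Q n <> 0.
Proof. apply qpoch_neq0; lra. Qed.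

Let one_sub_Qpow_neq0 n : 1 - Q * Q ^ n <> 0.
Proof. apply one_sub_neq0, Cmod_mult_pow_lt1; lra. Qed.

Lemma qbinom_gt N k : (N < k)%nat -> qbinom Q N k = 0.
Proof. intros H. unfold qbinom. destruct (Nat.leb_spec k N); auto; lia. Qed.

Lemma qbinom_le N k : (k <= N)%nat ->
  qbinom Q N k = qpoch Q Q N / (qpoch Q Q k * qpoch Q Q (N - k)).
Proof. intros H. unfold qbinom. destruct (Nat.leb_spec k N); auto; lia. Qed.

Lemma qbinom_0 N : qbinom Q N 0 = 1.
Proof. rewrite qbinom_le, Nat.sub_0_r by lia. simpl. field. auto. Qed.

Lemma qbinom_diag N : qbinom Q N N = 1.
Proof. rewrite qbinom_le, Nat.sub_diag by lia. simpl. field. auto. Qed.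

Lemma qbinom_sym N k : (k <= N)%nat -> qbinom Q N k = qbinom Q N (N - k).
Proof.
  intros H. rewrite !qbinom_le by lia. replace (N - (N - k))%nat with k by lia.
  field. auto.
Qed.

Lemma qbinom_pascal N k : qbinom Q (S N) (S k) = qbinom Q N (S k) + Q ^ (N - k) * qbinom Q N k.
Proof.
  destruct (le_lt_dec (S k) N) as [H|H].
  - rewrite !qbinom_le by lia.
    replace (S N - S k)%nat with (S (N - S k)) by lia.
    replace (N - k)%nat with (S (N - S k)) by lia.
    assert (EQ : Q ^ N = Q ^ k * Q ^ (N - S k) * Q).
    { replace N with (k + (N - S k) + 1)%nat at 1 by lia. rewrite !Cpow_add_r. simpl. ring. }
    rewrite !qpoch_S, EQ. simpl Cpow. field. auto.
  - destruct (Nat.eq_dec k N) as [<-|Hk].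
    + rewrite !qbinom_diag, (qbinom_gt k (S k)), Nat.sub_diag by lia. simpl. ring.
    + rewrite !qbinom_gt by lia. ring.
Qed.

End Gaussian_binomials.

(** * q-Chu-Vandermonde and the finite Jacobi triple product *)

Definition chu_term (p : C) (N : nat) (t s u : C) (m : nat) : C :=
  hqpoch u s p m * (- t) ^ m * p ^ tri m * qbinom p N m * qpoch (t * s * p ^ m) p (N - m).

Lemma qchu_vandermonde p N t s u : (Cmod p < 1)%R ->
  csum (chu_term p N t s u) (S N) = qpoch (t * u) p N.
Proof.
  intros Hp. revert t s u; induction N as [|N IH]; intros t s u.
  - unfold chu_term. simpl. rewrite qbinom_0 by auto. ring.
  - set (a := fun m => hqpoch u s p m * (- t) ^ m * p ^ tri m * qbinom p N m
                       * qpoch (t * s * p ^ m) p (S N - m)).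
    set (b := fun m => (u - s) * (- t) * p ^ N * chu_term p N t (s * p) u m).
    (* Pascal's rule splits the summand into a part where the Pochhammer symbol
       grows by one factor and a part where [s] is replaced by [s p]. *)
    assert (Ea : csum a (S (S N)) = (1 - t * s * p ^ N) * qpoch (t * u) p N).
    { rewrite csum_last, <- (IH t s u), <- csum_mult_l. unfold a at 2.
      rewrite qbinom_gt by lia. rewrite Cmult_0_r, Cmult_0_l, Cplus_0_r.
      apply csum_ext. intros m Hm. unfold a, chu_term.
      replace (S N - m)%nat with (S (N - m)) by lia. rewrite qpoch_S.
      replace (t * s * p ^ m * p ^ (N - m)) with (t * s * p ^ N)
        by (rewrite <- (Cpow_add_sub p m N) by lia; ring).
      ring. }
    assert (Eb : csum b (S N) = (u - s) * (- t) * p ^ N * qpoch (t * u) p N)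
      by (unfold b; rewrite csum_mult_l, IH; reflexivity).
    transitivity (csum a (S (S N)) + csum b (S N)).
    + rewrite csum_first, (csum_first a), <- Cplus_assoc, <- csum_plus. f_equal.
      * unfold chu_term, a. rewrite !qbinom_0 by auto. reflexivity.
      * apply csum_ext. intros m Hm. unfold a, b. unfold chu_term.
        rewrite qbinom_pascal by auto. rewrite hqpoch_S_l. simpl tri.
        replace (t * (s * p) * p ^ m) with (t * s * p ^ S m) by (simpl; ring).
        rewrite <- (Cpow_add_sub p m N) by lia.
        rewrite Cpow_add_r. simpl. ring.
    + rewrite Ea, Eb, qpoch_S. ring.
Qed.

Lemma csum_rev f n : csum f (S n) = csum (fun k => f (n - k)%nat) (S n).
Proof.
  induction n as [|n IH]; [reflexivity|].
  rewrite csum_last, IH, (csum_first (fun k => f (S n - k)%nat)), Nat.sub_0_r. simpl. ring.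
Qed.

(* Rothe's q-binomial theorem: the case [s = 0] of q-Chu-Vandermonde. *)
Lemma rothe Q v a : (Cmod Q < 1)%R ->
  qpoch (- v) Q a = csum (fun k => v ^ (a - k) * Q ^ tri (a - k) * qbinom Q a k) (S a).
Proof.
  intros HQ. rewrite csum_rev.
  replace (- v) with (- (1) * v) by ring. rewrite <- qchu_vandermonde with (s := RtoC 0) by auto.
  apply csum_ext. intros k Hk. unfold chu_term.
  replace (a - (a - k))%nat with k by lia. rewrite <- qbinom_sym by (auto || lia).
  rewrite hqpoch_0_m, Cmult_0_r, Cmult_0_l, qpoch_0_l.
  replace (- - (1)) with (RtoC 1) by ring. rewrite Cpow_1_l. ring.
Qed.

Section Finite_triple_product.
Variable Q : C.
Hypothesis HQ : (Cmod Q < 1)%R.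

(* The term of index [n = k - a] of the theta series [sum_n w^n Q^(n(n-1)/2)],
   written with [v = Q / w] when [n < 0]. *)
Definition jtp_coef (v w : C) (a k : nat) : C :=
  if (a <=? k)%nat then w ^ (k - a) * Q ^ tri (k - a) else v ^ (a - k) * Q ^ tri (a - k).

Lemma jtp_coef_S v w a b k : v * w = Q -> (k <= a + b)%nat ->
  jtp_coef v w a (S k) * Q ^ (a + b - k) = jtp_coef v w a k * (w * Q ^ b).
Proof.
  intros Hvw Hk. unfold jtp_coef.
  destruct (Nat.leb_spec a k), (Nat.leb_spec a (S k)); try lia.
  - replace (S k - a)%nat with (S (k - a)) by lia.
    replace (a + b - k)%nat with (b - (k - a))%nat by lia.
    rewrite <- (Cpow_add_sub Q (k - a) b) by lia. simpl. rewrite Cpow_add_r. ring.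
  - replace a with (S k) by lia. rewrite Nat.sub_diag.
    replace (S k - k)%nat with 1%nat by lia. replace (S k + b - k)%nat with (S b) by lia.
    simpl. rewrite <- Hvw. ring.
  - replace (a - k)%nat with (S (a - S k)) by lia.
    replace (a + b - k)%nat with (S (a - S k + b)) by lia.
    simpl. rewrite !Cpow_add_r, <- Hvw. ring.
Qed.

Lemma finite_jtp v w a b : v * w = Q ->
  qpoch (- v) Q a * qpoch (- w) Q b =
  csum (fun k => jtp_coef v w a k * qbinom Q (a + b) k) (S (a + b)).
Proof.
  intros Hvw. induction b as [|b IH].
  - rewrite Nat.add_0_r, (rothe Q v a HQ). simpl qpoch. rewrite Cmult_1_r.
    apply csum_ext. intros k Hk. unfold jtp_coef.
    destruct (Nat.leb_spec a k); [|reflexivity].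
    replace k with a by lia. rewrite Nat.sub_diag. reflexivity.
  - rewrite qpoch_S, Cmult_assoc, IH.
    replace (a + S b)%nat with (S (a + b)) by lia.
    rewrite (csum_first _ (S (a + b))).
    rewrite (csum_ext (fun k => jtp_coef v w a (S k) * qbinom Q (S (a + b)) (S k))
       (fun k => jtp_coef v w a (S k) * qbinom Q (a + b) (S k)
                 + (w * Q ^ b) * (jtp_coef v w a k * qbinom Q (a + b) k)) (S (a + b)))
      by (intros k Hk; rewrite (qbinom_pascal Q HQ), Cmult_plus_distr_l, Cmult_assoc,
          (jtp_coef_S v w a b k) by (auto; lia); ring).
    rewrite csum_plus, csum_mult_l, Cplus_assoc.
    replace (qbinom Q (S (a + b)) 0) with (qbinom Q (a + b) 0)
      by (rewrite !(qbinom_0 Q HQ); reflexivity).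
    rewrite <- (csum_first (fun k => jtp_coef v w a k * qbinom Q (a + b) k)).
    rewrite (csum_last _ (S (a + b))).
    rewrite (qbinom_gt Q (a + b) (S (a + b))) by lia. ring.
Qed.

End Finite_triple_product.

(** * Bailey's lemma *)

Section Bailey_lemma.
Variables p a w : C.
Hypothesis Hp : (Cmod p < 1)%R.
Hypothesis Ha : (Cmod (a * p) < 1)%R.
Hypothesis Hw : (Cmod w < 1)%R.

Definition bailey_weight (n r : nat) : C := / (qpoch p p (n - r) * qpoch (a * p) p (n + r)).

Definition bailey_pair (alpha beta : nat -> C) : Prop :=
  forall n, beta n = csum (fun r => alpha r * bailey_weight n r) (S n).

(* The kernel of Bailey's lemma with parameters [rho1 = a p / w] and [rho2 -> oo], via
   [(rho1; p)_k w^k = hqpoch w (a p) p k]; [w = 0] corresponds to [rho1 -> oo] too. *)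
Definition bailey_kernel (n k : nat) : C :=
  hqpoch w (a * p) p k * (- 1) ^ k * p ^ tri k / (qpoch p p (n - k) * qpoch w p n).

Definition bailey_factor (r : nat) : C :=
  hqpoch w (a * p) p r * (- 1) ^ r * p ^ tri r / qpoch w p r.

Definition bailey_alpha (alpha : nat -> C) (r : nat) : C := bailey_factor r * alpha r.

Definition bailey_beta (beta : nat -> C) (n : nat) : C :=
  csum (fun k => bailey_kernel n k * beta k) (S n).

Let qpoch_pp_neq0 n : qpoch p p n <> 0.
Proof. apply qpoch_neq0; lra. Qed.

Lemma bailey_kernel_weight r N m : (m <= N)%nat ->
  bailey_kernel (r + N) (r + m) * bailey_weight (r + m) r =
  bailey_factor r / (qpoch (w * p ^ r) p N * qpoch p p N * qpoch (a * p) p (r + N + r))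
  * chu_term p N (p ^ r) (a * p * p ^ r) w m.
Proof.
  intros Hm. unfold bailey_kernel, bailey_weight, bailey_factor, chu_term.
  rewrite hqpoch_add, tri_add, !Cpow_add_r, Cpow_mult_r.
  replace (r + N - (r + m))%nat with (N - m)%nat by lia.
  replace (r + m - r)%nat with m by lia.
  rewrite (qpoch_add w p r N).
  replace (r + m + r)%nat with (r + r + m)%nat by lia.
  replace (r + N + r)%nat with (r + r + m + (N - m))%nat by lia.
  rewrite (qpoch_add (a * p) p (r + r + m) (N - m)), (qpoch_add (a * p) p (r + r) m).
  rewrite (qbinom_le p N m) by lia.
  replace (p ^ r * (a * p * p ^ r) * p ^ m) with (a * p * p ^ (r + r) * p ^ m)
    by (rewrite Cpow_add_r; ring).
  replace (a * p * p ^ (r + r + m)) with (a * p * p ^ (r + r) * p ^ m)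
    by (rewrite (Cpow_add_r p (r + r) m); ring).
  replace ((- p ^ r) ^ m) with ((- 1) ^ m * (p ^ r) ^ m)
    by (rewrite <- Cpow_mult_l; f_equal; ring).
  assert (Hap : (Cmod (a * p * p ^ (r + r)) < 1)%R) by (apply Cmod_mult_pow_lt1; lra).
  assert (qpoch w p r <> 0) by (apply qpoch_neq0; lra).
  assert (qpoch (w * p ^ r) p N <> 0) by (apply qpoch_neq0; [apply Cmod_mult_pow_lt1|]; lra).
  assert (qpoch (a * p) p (r + r) <> 0) by (apply qpoch_neq0; lra).
  assert (qpoch (a * p * p ^ (r + r)) p m <> 0) by (apply qpoch_neq0; lra).
  assert (qpoch (a * p * p ^ (r + r) * p ^ m) p (N - m) <> 0)
    by (apply qpoch_neq0; [apply Cmod_mult_pow_lt1|]; lra).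
  field. auto 10.
Qed.

Lemma bailey_kernel_sum r N :
  csum (fun m => bailey_kernel (r + N) (r + m) * bailey_weight (r + m) r) (S N)
  = bailey_factor r * bailey_weight (r + N) r.
Proof.
  rewrite (csum_ext _ (fun m => bailey_factor r / (qpoch (w * p ^ r) p N * qpoch p p N
      * qpoch (a * p) p (r + N + r)) * chu_term p N (p ^ r) (a * p * p ^ r) w m))
    by (intros m Hm; apply bailey_kernel_weight; lia).
  rewrite csum_mult_l, qchu_vandermonde by auto.
  unfold bailey_weight. replace (r + N - r)%nat with N by lia.
  replace (p ^ r * w) with (w * p ^ r) by ring.
  assert (qpoch (w * p ^ r) p N <> 0) by (apply qpoch_neq0; [apply Cmod_mult_pow_lt1|]; lra).
  assert (qpoch (a * p) p (r + N + r) <> 0) by (apply qpoch_neq0; lra).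
  field. auto.
Qed.

Theorem bailey_lemma alpha beta :
  bailey_pair alpha beta -> bailey_pair (bailey_alpha alpha) (bailey_beta beta).
Proof.
  intros H n. unfold bailey_beta.
  rewrite (csum_ext (fun k => bailey_kernel n k * beta k)
     (fun k => csum (fun r => bailey_kernel n k * (alpha r * bailey_weight k r)) (S k)))
    by (intros k Hk; rewrite H, csum_mult_l; reflexivity).
  rewrite csum_triangle_swap. apply csum_ext. intros r Hr.
  rewrite (csum_ext _ (fun m => alpha r
     * (bailey_kernel (r + (n - r)) (r + m) * bailey_weight (r + m) r)))
    by (intros; replace (r + (n - r))%nat with n by lia; ring).
  rewrite csum_mult_l, bailey_kernel_sum. unfold bailey_alpha.
  replace (r + (n - r))%nat with n by lia. ring.
Qed.

End Bailey_lemma.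

(** * The unit Bailey pairs *)

Definition unit_beta (n : nat) : C := match n with O => 1 | _ => 0 end.

Section Unit_pairs.
Variable p : C.
Hypothesis Hp : (Cmod p < 1)%R.

Let qpoch_pp_neq0 n : qpoch p p n <> 0.
Proof. apply qpoch_neq0; lra. Qed.

Let one_sub_p_neq0 : 1 - p <> 0.
Proof. apply one_sub_neq0; lra. Qed.

(* The two pairs come from the finite triple product with [v = - p], [w = - 1],
   whose left-hand side vanishes because [(1; p)_(n+1) = 0]. *)
Let qpoch_1_S n : qpoch (- - 1) p (S n) = 0.
Proof. rewrite qpoch_S_l. replace (1 - - - 1) with (RtoC 0) by ring. ring. Qed.

Definition unit_alpha0 (r : nat) : C :=
  match r with O => 1 | _ => (- 1) ^ r * p ^ tri r * (1 + p ^ r) end.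

Definition unit_alpha1 (r : nat) : C :=
  (- 1) ^ r * p ^ tri r * (1 - p ^ (2 * r + 1)) / (1 - p).

Lemma unit_pair0 : bailey_pair p 1 unit_alpha0 unit_beta.
Proof.
  intros [|n']; [unfold bailey_weight; simpl; field|].
  set (n := S n'). simpl unit_beta.
  assert (J := finite_jtp p Hp (- p) (- 1) n (S n') ltac:(ring)).
  rewrite qpoch_1_S, Cmult_0_r in J. fold n in J.
  replace (n + n)%nat with (2 * n)%nat in J by lia.
  rewrite csum_fold_even in J. replace (2 * n)%nat with (n + n)%nat in J by lia.
  rewrite (csum_ext (fun r => unit_alpha0 r * bailey_weight p 1 n r)
    (fun r => / qpoch p p (n + n) * (unit_alpha0 r * qbinom p (n + n) (n + r)))).
  2:{ intros r Hr. unfold bailey_weight. rewrite qbinom_le by lia.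
      replace (n + n - (n + r))%nat with (n - r)%nat by lia.
      rewrite Cmult_1_l. field. auto. }
  rewrite csum_mult_l, csum_first.
  rewrite (csum_ext (fun k => unit_alpha0 (S k) * qbinom p (n + n) (n + S k))
    (fun r => jtp_coef p (- p) (- 1) n (n + S r) * qbinom p (n + n) (n + S r) +
              jtp_coef p (- p) (- 1) n (n - S r) * qbinom p (n + n) (n - S r))).
  2:{ intros r Hr. unfold jtp_coef.
      destruct (Nat.leb_spec n (n + S r)), (Nat.leb_spec n (n - S r)); try lia.
      replace (n + S r - n)%nat with (S r) by lia.
      replace (n - (n - S r))%nat with (S r) by lia.
      rewrite (qbinom_sym p Hp (n + n) (n - S r)) by lia.
      replace (n + n - (n - S r))%nat with (n + S r)%nat by lia.
      rewrite Cpow_opp. simpl unit_alpha0. simpl tri. simpl Cpow. rewrite !Cpow_add_r. ring. }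
  unfold jtp_coef at 1 in J. rewrite Nat.leb_refl, Nat.sub_diag in J.
  simpl unit_alpha0. simpl tri in J. simpl Cpow in J.
  rewrite Nat.add_0_r. transitivity (/ qpoch p p (n + n) * 0); [ring|]. rewrite J. ring.
Qed.

Lemma unit_pair1 : bailey_pair p p unit_alpha1 unit_beta.
Proof.
  intros [|n']; [unfold bailey_weight, unit_alpha1; simpl; field; auto|].
  set (n := S n'). simpl unit_beta.
  assert (J := finite_jtp p Hp (- p) (- 1) (S n) (S n') ltac:(ring)).
  rewrite qpoch_1_S, Cmult_0_r in J. fold n in J.
  replace (S n + n)%nat with (S (2 * n))%nat in J by lia.
  rewrite csum_fold_odd in J. replace (2 * n)%nat with (n + n)%nat in J by lia.
  rewrite (csum_ext (fun r => unit_alpha1 r * bailey_weight p p n r)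
    (fun r => (1 - p) / qpoch p p (S (n + n)) * (unit_alpha1 r * qbinom p (S (n + n)) (n - r)))).
  2:{ intros r Hr. unfold bailey_weight. rewrite qbinom_le by lia.
      replace (S (n + n) - (n - r))%nat with (S (n + r))%nat by lia.
      rewrite (qpoch_S_l p p (n + r)).
      assert (qpoch (p * p) p (n + r) <> 0) by (apply qpoch_neq0; [apply Cmod_mult_lt1|]; lra).
      field. auto. }
  rewrite csum_mult_l.
  rewrite (csum_ext (fun r => unit_alpha1 r * qbinom p (S (n + n)) (n - r))
    (fun r => / (1 - p) * (jtp_coef p (- p) (- 1) (S n) (S n + r) * qbinom p (S (n + n)) (S n + r)
              + jtp_coef p (- p) (- 1) (S n) (n - r) * qbinom p (S (n + n)) (n - r)))).
  2:{ intros r Hr. unfold jtp_coef.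
      destruct (Nat.leb_spec (S n) (S n + r)), (Nat.leb_spec (S n) (n - r)); try lia.
      replace (S n + r - S n)%nat with r by lia.
      replace (S n - (n - r))%nat with (S r) by lia.
      rewrite (qbinom_sym p Hp (S (n + n)) (S n + r)) by lia.
      replace (S (n + n) - (S n + r))%nat with (n - r)%nat by lia.
      rewrite Cpow_opp. unfold unit_alpha1. simpl tri.
      replace (2 * r + 1)%nat with (S (r + r)) by lia.
      simpl Cpow. rewrite !Cpow_add_r. field. auto. }
  rewrite csum_mult_l, <- J. ring.
Qed.

End Unit_pairs.

Lemma bailey_beta_unit p a w n : (Cmod p < 1)%R -> (Cmod w < 1)%R ->
  bailey_beta p a w unit_beta n = / (qpoch p p n * qpoch w p n).
Proof.
  intros Hp Hw. unfold bailey_beta. rewrite csum_first, csum_eq0 by (intros; simpl; ring).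
  unfold bailey_kernel. simpl. rewrite Nat.sub_0_r. field.
  split; apply qpoch_neq0; lra.
Qed.

Lemma bailey_kernel_0 p a n k :
  bailey_kernel p a 0 n k = (a * p) ^ k * p ^ (tri k + tri k) / qpoch p p (n - k).
Proof.
  unfold bailey_kernel. rewrite hqpoch_0_l, qpoch_0_l, Cpow_add_r, Cpow_opp.
  pose proof (Cpow_opp1_sqr k). unfold Cdiv. rewrite Cmult_1_r. ring [H].
Qed.

Lemma bailey_factor_0 p a r : bailey_factor p a 0 r = (a * p) ^ r * p ^ (tri r + tri r).
Proof.
  unfold bailey_factor. rewrite hqpoch_0_l, qpoch_0_l, Cpow_add_r, Cpow_opp.
  pose proof (Cpow_opp1_sqr r). unfold Cdiv. replace (/ 1) with (RtoC 1) by field. ring [H].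
Qed.

Lemma csum_nested_swap (F : nat -> nat -> C) (b : nat -> C) N :
  csum (fun n => F N n * csum (fun k => F n k * b k) (S n)) (S N) =
  csum (fun i => csum (fun m => F N (i + m)%nat * (F (i + m)%nat i * b i)) (S (N - i))) (S N).
Proof.
  rewrite <- (csum_triangle_swap (fun n k => F N n * (F n k * b k)) N).
  apply csum_ext. intros n Hn. rewrite <- csum_mult_l. reflexivity.
Qed.

Section Finite_identities.
Variables q p : C.
Hypothesis Hpq : p = q * q.
Hypothesis Hq : (Cmod q < 1)%R.

Let Hp : (Cmod p < 1)%R.
Proof. rewrite Hpq. apply Cmod_mult_lt1; lra. Qed.

Let qpoch_pp_neq0 n : qpoch p p n <> 0.
Proof. apply qpoch_neq0; lra. Qed.

Let one_add_q_neq0 : 1 + q <> 0.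
Proof. replace (1 + q) with (1 - - q) by ring. apply one_sub_neq0. rewrite Cmod_opp. lra. Qed.

Lemma qpoch_q_even i : qpoch q q (2 * i) = qpoch p p i * qpoch q p i.
Proof.
  induction i as [|i IH]; [simpl; ring|].
  replace (2 * S i)%nat with (S (S (2 * i))) by lia.
  rewrite !qpoch_S, IH, Hpq. replace (2 * i)%nat with (i + i)%nat by lia.
  simpl. rewrite !Cpow_add_r, !Cpow_mult_l. ring.
Qed.

Lemma qpoch_q_odd i : qpoch q q (2 * i + 1) = qpoch p p i * ((1 - q) * qpoch (q * p) p i).
Proof.
  replace (2 * i + 1)%nat with (S (2 * i)) by lia.
  rewrite qpoch_S, qpoch_q_even, <- qpoch_S_l, qpoch_S, Hpq.
  replace (2 * i)%nat with (i + i)%nat by lia. rewrite !Cpow_add_r, !Cpow_mult_l. ring.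
Qed.

Definition theta1 (r : nat) : C :=
  match r with O => 1 | _ => q ^ (5 * r) * (q ^ 12) ^ tri r * (1 + q ^ (2 * r)) end.

Definition theta2 (r : nat) : C := q ^ (11 * r) * (q ^ 12) ^ tri r * (1 + q ^ (2 * r + 1)).

Lemma bailey_alpha_theta1 r :
  bailey_alpha p 1 0 (bailey_alpha p 1 0 (bailey_alpha p 1 q (unit_alpha0 p))) r = theta1 r.
Proof.
  unfold bailey_alpha. rewrite !bailey_factor_0.
  assert (Hf : bailey_factor p 1 q r = q ^ r * (- 1) ^ r * p ^ tri r).
  { unfold bailey_factor. replace (1 * p) with (q * q) by (rewrite Hpq; ring).
    rewrite hqpoch_scale. field. apply qpoch_neq0; lra. }
  rewrite Hf. destruct r as [|r']; [simpl; ring|].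
  set (r := S r'). change (unit_alpha0 p r) with ((- 1) ^ r * p ^ tri r * (1 + p ^ r)).
  change (theta1 r) with (q ^ (5 * r) * (q ^ 12) ^ tri r * (1 + q ^ (2 * r))).
  pose proof (Cpow_opp1_sqr r) as Z.
  rewrite Hpq, Cmult_1_l, !Cpow_mult_l, !Cpow_add_r, <- (Cpow_mult_r q 12 (tri r)).
  rewrite (Nat.mul_comm 12 (tri r)), (Nat.mul_comm 5 r), (Nat.mul_comm 2 r), !Cpow_mult_r.
  ring [Z].
Qed.

Lemma bailey_alpha_theta2 r :
  bailey_alpha p p 0 (bailey_alpha p p 0 (bailey_alpha p p (q * p) (unit_alpha1 p))) r
  = theta2 r / (1 + q).
Proof.
  unfold bailey_alpha. rewrite !bailey_factor_0.
  assert (Hqp : qpoch (q * p) p r <> 0) by (apply qpoch_neq0; [apply Cmod_mult_lt1|]; lra).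
  assert (Hqr : 1 - q * p ^ r <> 0) by (apply one_sub_neq0, Cmod_mult_pow_lt1; lra).
  assert (Hf : bailey_factor p p (q * p) r
               = (q * p) ^ r * (- 1) ^ r * p ^ tri r * (1 - q) / (1 - q * p ^ r)).
  { unfold bailey_factor. replace (p * p) with ((q * p) * q) by (rewrite Hpq; ring).
    rewrite hqpoch_scale.
    assert (E : qpoch q p (S r) = qpoch q p r * (1 - q * p ^ r)) by apply qpoch_S.
    rewrite qpoch_S_l in E.
    replace (qpoch q p r) with ((1 - q) * qpoch (q * p) p r / (1 - q * p ^ r))
      by (rewrite E; field; auto).
    field. auto. }
  rewrite Hf. unfold unit_alpha1, theta2.
  assert (1 - p <> 0) by (apply one_sub_neq0; lra).
  pose proof (Cpow_opp1_sqr r) as Z.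
  transitivity ((- 1) ^ r * (- 1) ^ r
     * (q ^ (11 * r) * (q ^ 12) ^ tri r * (1 + q ^ (2 * r + 1)) / (1 + q)));
    [|rewrite Z; ring].
  revert Hqr H. rewrite Hpq. intros Hqr H.
  rewrite (Nat.mul_comm 11 r), (Nat.mul_comm 2 r), <- (Cpow_mult_r q 12 (tri r)).
  rewrite (Nat.mul_comm 12 (tri r)), !Cpow_add_r, !Cpow_mult_r, !Cpow_mult_l.
  rewrite !Cpow_mult_l in Hqr. simpl Cpow.
  field. repeat split; auto.
Qed.

Definition summand1 (i j : nat) : C :=
  q ^ (4 * i * i + 4 * i * j + 2 * j * j) / (qpoch q q (2 * i) * qpoch p p j).

Definition summand2 (i j : nat) : C :=
  q ^ (4 * i * i + 4 * i * j + 2 * j * j + 4 * i + 2 * j) / (qpoch q q (2 * i + 1) * qpoch p p j).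

Theorem finite_identity1 N :
  csum (fun i => csum (fun j => summand1 i j / qpoch p p (N - (i + j))) (S (N - i))) (S N)
  = csum (fun r => theta1 r / (qpoch p p (N - r) * qpoch p p (N + r))) (S N).
Proof.
  assert (Ha : (Cmod (1 * p) < 1)%R) by (rewrite Cmult_1_l; auto).
  assert (B0 : (Cmod 0 < 1)%R) by (rewrite Cmod_0; lra).
  pose proof (bailey_lemma p 1 0 Hp Ha B0 _ _ (bailey_lemma p 1 0 Hp Ha B0 _ _
                (bailey_lemma p 1 q Hp Ha Hq _ _ (unit_pair0 p Hp))) N) as BP.
  rewrite (csum_ext _ (fun r => theta1 r * bailey_weight p 1 N r)) in BP
    by (intros r Hr; rewrite bailey_alpha_theta1; reflexivity).
  transitivity (csum (fun r => theta1 r * bailey_weight p 1 N r) (S N)).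
  2:{ apply csum_ext. intros r Hr. unfold bailey_weight. rewrite Cmult_1_l. reflexivity. }
  rewrite <- BP. unfold bailey_beta at 1 2.
  rewrite csum_nested_swap. apply csum_ext. intros i Hi. apply csum_ext. intros m Hm.
  rewrite bailey_beta_unit, !bailey_kernel_0 by auto.
  unfold summand1. rewrite qpoch_q_even. replace (i + m - i)%nat with m by lia.
  replace (q ^ (4 * i * i + 4 * i * m + 2 * m * m))
    with ((1 * p) ^ (i + m) * p ^ (tri (i + m) + tri (i + m))
          * ((1 * p) ^ i * p ^ (tri i + tri i))).
  2:{ rewrite Cmult_1_l, <- !Cpow_add_r, Hpq, Cpow_mult_l, <- Cpow_add_r. f_equal.
      pose proof (tri_double (i + m)). pose proof (tri_double i). nia. }
  assert (qpoch q p i <> 0) by (apply qpoch_neq0; lra).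
  field. auto.
Qed.

Theorem finite_identity2 N :
  csum (fun i => csum (fun j => summand2 i j / qpoch p p (N - (i + j))) (S (N - i))) (S N)
  = csum (fun r => theta2 r / (qpoch p p (N - r) * qpoch p p (S (N + r)))) (S N).
Proof.
  assert (Ha : (Cmod (p * p) < 1)%R) by (apply Cmod_mult_lt1; lra).
  assert (B0 : (Cmod 0 < 1)%R) by (rewrite Cmod_0; lra).
  assert (Hw : (Cmod (q * p) < 1)%R) by (apply Cmod_mult_lt1; lra).
  assert (Hq1 : 1 - q <> 0) by (apply one_sub_neq0; lra).
  pose proof (bailey_lemma p p 0 Hp Ha B0 _ _ (bailey_lemma p p 0 Hp Ha B0 _ _
                (bailey_lemma p p (q * p) Hp Ha Hw _ _ (unit_pair1 p Hp))) N) as BP.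
  rewrite (csum_ext _ (fun r => theta2 r / (1 + q) * bailey_weight p p N r)) in BP
    by (intros r Hr; rewrite bailey_alpha_theta2; reflexivity).
  (* [(p; p)_(n + 1) = (1 - p) (p p; p)_n] and [1 - p = (1 - q) (1 + q)]. *)
  transitivity (csum (fun r => / (1 - q) * (theta2 r / (1 + q) * bailey_weight p p N r)) (S N)).
  2:{ apply csum_ext. intros r Hr. unfold bailey_weight. rewrite qpoch_S_l, Hpq.
      assert (qpoch (q * q * (q * q)) (q * q) (N + r) <> 0)
        by (apply qpoch_neq0; rewrite <- Hpq; [apply Cmod_mult_lt1|]; lra).
      assert (qpoch (q * q) (q * q) (N - r) <> 0) by (rewrite <- Hpq; auto).
      assert (1 - q * q <> 0) by (rewrite <- Hpq; apply one_sub_neq0; lra).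
      field. auto. }
  rewrite csum_mult_l, <- BP. unfold bailey_beta at 1 2.
  rewrite csum_nested_swap, <- csum_mult_l.
  apply csum_ext. intros i Hi. rewrite <- csum_mult_l. apply csum_ext. intros m Hm.
  rewrite bailey_beta_unit, !bailey_kernel_0 by auto.
  unfold summand2. rewrite qpoch_q_odd. replace (i + m - i)%nat with m by lia.
  replace (q ^ (4 * i * i + 4 * i * m + 2 * m * m + 4 * i + 2 * m))
    with ((p * p) ^ (i + m) * p ^ (tri (i + m) + tri (i + m))
          * ((p * p) ^ i * p ^ (tri i + tri i))).
  2:{ rewrite !Cpow_mult_l, <- !Cpow_add_r, Hpq, Cpow_mult_l, <- Cpow_add_r. f_equal.
      pose proof (tri_double (i + m)). pose proof (tri_double i). nia. }
  assert (qpoch (q * p) p i <> 0) by (apply qpoch_neq0; lra).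
  field. auto.
Qed.

End Finite_identities.

Section Finite_products.
Variable q : C.
Hypothesis Hq : (Cmod q < 1)%R.

Let HQ : (Cmod (q ^ 12) < 1)%R.
Proof. apply Cmod_pow_lt1; [auto|lia]. Qed.

Theorem finite_product1 N :
  qpoch (- q ^ 5) (q ^ 12) N * qpoch (- q ^ 7) (q ^ 12) N
  = csum (fun r => theta1 q r * qbinom (q ^ 12) (N + N) (N + r)) (S N).
Proof.
  rewrite (finite_jtp (q ^ 12) HQ (q ^ 5) (q ^ 7)) by (rewrite <- Cpow_add_r; reflexivity).
  replace (N + N)%nat with (2 * N)%nat at 1 by lia.
  rewrite csum_fold_even, csum_first. replace (2 * N)%nat with (N + N)%nat by lia. f_equal.
  - unfold jtp_coef. rewrite Nat.leb_refl, Nat.sub_diag, Nat.add_0_r. simpl. ring.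
  - apply csum_ext. intros r Hr. unfold jtp_coef.
    destruct (Nat.leb_spec N (N + S r)), (Nat.leb_spec N (N - S r)); try lia.
    replace (N + S r - N)%nat with (S r) by lia.
    replace (N - (N - S r))%nat with (S r) by lia.
    rewrite (qbinom_sym (q ^ 12) HQ (N + N) (N - S r)) by lia.
    replace (N + N - (N - S r))%nat with (N + S r)%nat by lia.
    unfold theta1. set (m := S r). rewrite <- !Cpow_mult_r.
    replace (7 * m)%nat with (5 * m + 2 * m)%nat by lia. rewrite Cpow_add_r. ring.
Qed.

Theorem finite_product2 N :
  qpoch (- q) (q ^ 12) (S N) * qpoch (- q ^ 11) (q ^ 12) N
  = csum (fun r => theta2 q r * qbinom (q ^ 12) (S (N + N)) (S (N + r))) (S N).
Proof.
  rewrite (finite_jtp (q ^ 12) HQ q (q ^ 11)) by (change (q * q ^ 11 = q ^ 12); reflexivity).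
  replace (S N + N)%nat with (S (2 * N)) by lia.
  rewrite csum_fold_odd. replace (2 * N)%nat with (N + N)%nat by lia.
  apply csum_ext. intros r Hr. unfold jtp_coef.
  destruct (Nat.leb_spec (S N) (S N + r)), (Nat.leb_spec (S N) (N - r)); try lia.
  replace (S N + r - S N)%nat with r by lia.
  replace (S N - (N - r))%nat with (S r) by lia.
  rewrite (qbinom_sym (q ^ 12) HQ (S (N + N)) (N - r)) by lia.
  replace (S (N + N) - (N - r))%nat with (S (N + r)) by lia.
  replace (S N + r)%nat with (S (N + r)) by lia.
  unfold theta2. simpl tri. rewrite <- !Cpow_mult_r, !Cpow_add_r.
  replace (q ^ (12 * (tri r + r))) with (q ^ (12 * tri r) * (q ^ (11 * r) * q ^ r))
    by (rewrite <- !Cpow_add_r; f_equal; lia).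
  replace (q ^ (2 * r)) with (q ^ r * q ^ r) by (rewrite <- Cpow_add_r; f_equal; lia).
  simpl Cpow. ring.
Qed.

End Finite_products.

Definition cv (u : nat -> C) (l : C) : Prop := filterlim u eventually (locally l).

Lemma cv_eps u l : cv u l <->
  forall eps : R, (0 < eps)%R -> exists N, forall n, (N <= n)%nat -> (Cmod (u n - l) < eps)%R.
Proof.
  unfold cv. rewrite (filterlim_locally_ball_norm (K := C_AbsRing) (U := C_NormedModule)).
  split; intros H eps.
  - intros He. exact (H (mkposreal eps He)).
  - exact (H eps (cond_pos eps)).
Qed.

Lemma cv_const c : cv (fun _ => c) c.
Proof. apply filterlim_const. Qed.

Lemma cv_plus u v l m : cv u l -> cv v m -> cv (fun n => u n + v n) (l + m).
Proof.
  intros Hu Hv.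
  exact (filterlim_comp_2 u v Cplus Hu Hv
           (filterlim_plus (K := C_AbsRing) (V := C_NormedModule) l m)).
Qed.

(* [C] carries two uniform structures (as a product space and as an absolute-value
   ring); they have the same neighbourhoods, and [filterlim_mult] uses the second. *)
Lemma cv_abs_ring u l :
  cv u l <-> filterlim u eventually (@locally (AbsRing_UniformSpace C_AbsRing) l).
Proof. split; intros H P HP; apply H; apply locally_C; exact HP. Qed.

Lemma cv_mult u v l m : cv u l -> cv v m -> cv (fun n => u n * v n) (l * m).
Proof.
  rewrite !cv_abs_ring. intros Hu Hv.
  exact (filterlim_comp_2 u v Cmult Hu Hv (filterlim_mult (K := C_AbsRing) l m)).
Qed.

Lemma cv_scal c u l : cv u l -> cv (fun n => c * u n) (c * l).
Proof. apply cv_mult, cv_const. Qed.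

Lemma cv_unique u l m : cv u l -> cv u m -> l = m.
Proof. apply (filterlim_locally_unique (K := C_AbsRing) (V := C_NormedModule)). Qed.

Lemma cv_comp u l (phi : nat -> nat) :
  cv u l -> (forall K, exists N0, forall N, (N0 <= N)%nat -> (K <= phi N)%nat) ->
  cv (fun N => u (phi N)) l.
Proof.
  intros H Hphi. apply (filterlim_comp nat nat C phi u eventually eventually); auto.
  intros P [K HK]. destruct (Hphi K) as [N0 HN0]. exists N0. auto.
Qed.

Lemma cv_inv u l : cv u l -> l <> 0 -> cv (fun n => / u n) (/ l).
Proof.
  rewrite !cv_eps. intros H Hl eps He.
  assert (Hl0 : (0 < Cmod l)%R) by (apply Cmod_gt_0; auto).
  destruct (H (Rmin (Cmod l / 2) (eps * Cmod l * Cmod l / 2)))%R as [N HN].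
  { apply Rmin_glb_lt; [lra|]. apply Rdiv_lt_0_compat; [|lra].
    repeat apply Rmult_lt_0_compat; lra. }
  exists N. intros n Hn. specialize (HN n Hn).
  pose proof (Rmin_l (Cmod l / 2) (eps * Cmod l * Cmod l / 2)).
  pose proof (Rmin_r (Cmod l / 2) (eps * Cmod l * Cmod l / 2)).
  assert (Hu : (Cmod l / 2 <= Cmod (u n))%R).
  { pose proof (Cmod_triangle (u n) (l - u n)) as T.
    replace (u n + (l - u n)) with l in T by ring.
    replace (l - u n) with (- (u n - l)) in T by ring. rewrite Cmod_opp in T. lra. }
  assert (u n <> 0) by (intro E; rewrite E, Cmod_0 in Hu; lra).
  replace (/ u n - / l) with (- (u n - l) / (u n * l)) by (field; auto).
  rewrite Cmod_div, Cmod_opp, Cmod_mult by (apply Cmult_neq_0; auto).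
  assert (0 < Cmod (u n) * Cmod l)%R by nra.
  apply (Rmult_lt_reg_r (Cmod (u n) * Cmod l)); [lra|].
  unfold Rdiv. rewrite Rmult_assoc, Rinv_l, Rmult_1_r by lra.
  assert (eps * (Cmod l / 2) * Cmod l <= eps * Cmod (u n) * Cmod l)%R
    by (apply Rmult_le_compat_r; [lra|apply Rmult_le_compat_l; lra]).
  lra.
Qed.

Lemma cv_csum (f : nat -> nat -> C) g K :
  (forall k, (k < K)%nat -> cv (fun N => f N k) (g k)) ->
  cv (fun N => csum (f N) K) (csum g K).
Proof.
  induction K as [|K IH]; intros H; [apply cv_const|].
  apply cv_plus; [apply IH; auto|apply H; lia].
Qed.

Lemma cv_le_bound u l B N0 :
  cv u l -> (forall n, (N0 <= n)%nat -> (Cmod (u n) <= B)%R) -> (Cmod l <= B)%R.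
Proof.
  rewrite cv_eps. intros H HB. apply Rnot_lt_le. intros Hlt.
  destruct (H (Cmod l - B)%R ltac:(lra)) as [N HN].
  specialize (HN (max N N0) ltac:(lia)). specialize (HB (max N N0) ltac:(lia)).
  pose proof (Cmod_triangle (u (max N N0)) (- (u (max N N0) - l))) as T.
  replace (u (max N N0) + - (u (max N N0) - l)) with l in T by ring.
  rewrite Cmod_opp in T. lra.
Qed.

Lemma cv_ge_bound u l c : cv u l -> (forall n, (c <= Cmod (u n))%R) -> (c <= Cmod l)%R.
Proof.
  rewrite cv_eps. intros H Hc. apply Rnot_lt_le. intros Hlt.
  destruct (H (c - Cmod l)%R ltac:(lra)) as [N HN].
  specialize (HN N (le_n N)). specialize (Hc N).
  pose proof (Cmod_triangle l (u N - l)) as T.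
  replace (l + (u N - l)) with (u N) in T by ring. lra.
Qed.

(** * Series and Tannery's theorem *)

Lemma sum_n_csum (a : nat -> C) n : sum_n a n = csum a (S n).
Proof. induction n as [|n IH]; [rewrite sum_O; simpl; ring|]. rewrite sum_Sn, IH. reflexivity. Qed.

Lemma is_seriesC_cv a l : is_seriesC a l <-> cv (csum a) l.
Proof.
  change (cv (sum_n a) l <-> cv (csum a) l). rewrite !cv_eps.
  split; intros H eps He; destruct (H eps He) as [N HN].
  - exists (S N). intros [|n] Hn; [lia|]. rewrite <- sum_n_csum. apply HN. lia.
  - exists N. intros n Hn. rewrite sum_n_csum. apply HN. lia.
Qed.

Lemma is_seriesC_unique a l m : is_seriesC a l -> is_seriesC a m -> l = m.
Proof. rewrite !is_seriesC_cv. apply cv_unique. Qed.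

Lemma is_seriesC_scal c a l : is_seriesC a l -> is_seriesC (fun n => a n * c) (l * c).
Proof.
  rewrite !is_seriesC_cv. intros H.
  apply (filterlim_ext (fun n => c * csum a n)); [|rewrite Cmult_comm; apply cv_scal; auto].
  intros n. rewrite <- csum_mult_l. apply csum_ext. intros; ring.
Qed.

Lemma ex_seriesC_le (a : nat -> C) (M : nat -> R) :
  (forall n, (Cmod (a n) <= M n)%R) -> ex_series M -> exists l, is_seriesC a l.
Proof. intros Hb HM. exact (ex_series_le (V := C_CompleteNormedModule) a M Hb HM). Qed.

Lemma geom_series c x : (0 <= x < 1)%R -> is_series (fun n => c * x ^ n)%R (c / (1 - x))%R.
Proof.
  intros H. apply (is_series_scal_l c (fun n => x ^ n)%R (/ (1 - x))%R), is_series_geom.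
  rewrite Rabs_right; lra.
Qed.

Fixpoint rsum (f : nat -> R) (n : nat) : R :=
  match n with O => 0%R | S m => (rsum f m + f m)%R end.

Lemma sum_n_rsum (a : nat -> R) n : sum_n a n = rsum a (S n).
Proof. induction n as [|n IH]; [rewrite sum_O; simpl; ring|]. rewrite sum_Sn, IH. reflexivity. Qed.

Lemma rsum_le f g n : (forall k, (k < n)%nat -> (f k <= g k)%R) -> (rsum f n <= rsum g n)%R.
Proof.
  induction n as [|n IH]; intros H; simpl; [lra|].
  assert (f n <= g n)%R by (apply H; lia). assert (rsum f n <= rsum g n)%R by auto. lra.
Qed.

Lemma rsum_sub_le f g K N : (K <= N)%nat -> (forall k, (k < N)%nat -> (f k <= g k)%R) ->
  (rsum f N - rsum f K <= rsum g N - rsum g K)%R.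
Proof.
  intros HKN. induction HKN as [|N HKN IH]; intros H; [lra|]. simpl.
  assert (rsum f N - rsum f K <= rsum g N - rsum g K)%R by auto.
  specialize (H N ltac:(lia)). lra.
Qed.

Lemma Cmod_csum_le f n : (Cmod (csum f n) <= rsum (fun k => Cmod (f k)) n)%R.
Proof.
  induction n as [|n IH]; simpl; [rewrite Cmod_0; lra|].
  pose proof (Cmod_triangle (csum f n) (f n)). lra.
Qed.

Lemma Cmod_csum_sub_le f K N : (K <= N)%nat ->
  (Cmod (csum f N - csum f K) <= rsum (fun k => Cmod (f k)) N - rsum (fun k => Cmod (f k)) K)%R.
Proof.
  intros H. induction H as [|N H IH].
  - replace (csum f K - csum f K) with (RtoC 0) by ring. rewrite Cmod_0. lra.
  - simpl. replace (csum f N + f N - csum f K) with ((csum f N - csum f K) + f N) by ring.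
    pose proof (Cmod_triangle (csum f N - csum f K) (f N)). lra.
Qed.

Lemma is_series_rsum M SM : is_series M SM ->
  forall eps, (0 < eps)%R -> exists K, forall n, (K <= n)%nat -> (Rabs (rsum M n - SM) < eps)%R.
Proof.
  intros HS eps He.
  destruct (proj1 (filterlim_locally_ball_norm (K := R_AbsRing) (U := R_NormedModule) _ _) HS
              (mkposreal eps He)) as [N HN].
  exists (S N). intros [|n] Hn; [lia|]. rewrite <- sum_n_rsum. apply (HN n). lia.
Qed.

Lemma rsum_le_series M SM n : (forall k, (0 <= M k)%R) -> is_series M SM -> (rsum M n <= SM)%R.
Proof.
  intros H0 HS. apply Rnot_lt_le. intros Hlt.
  destruct (is_series_rsum M SM HS (rsum M n - SM)%R ltac:(lra)) as [K HK].
  specialize (HK (max K n) ltac:(lia)).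
  assert (rsum M n <= rsum M (max K n))%R.
  { assert (Hmono : forall m, (n <= m)%nat -> (rsum M n <= rsum M m)%R).
    { intros m Hm. induction Hm; simpl; [lra|]. specialize (H0 m). lra. }
    apply Hmono. lia. }
  apply Rabs_def2 in HK. lra.
Qed.

Theorem tannery (f : nat -> nat -> C) (g : nat -> C) (M : nat -> R) SM :
  (forall k, (0 <= M k)%R) -> is_series M SM ->
  (forall N k, (k <= N)%nat -> (Cmod (f N k) <= M k)%R) ->
  (forall k, cv (fun N => f N k) (g k)) ->
  exists G, is_seriesC g G /\ cv (fun N => csum (f N) (S N)) G.
Proof.
  intros HM0 HMS Hb Hcv.
  assert (Hg : forall k, (Cmod (g k) <= M k)%R)
    by (intros k; apply (cv_le_bound _ _ _ k (Hcv k)); intros; apply Hb; lia).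
  destruct (ex_seriesC_le g M Hg (ex_intro _ SM HMS)) as [G HG].
  exists G. split; auto.
  apply is_seriesC_cv in HG. rewrite cv_eps in *. intros eps He.
  destruct (HG (eps / 4)%R ltac:(lra)) as [K1 HK1].
  destruct (is_series_rsum M SM HMS (eps / 4)%R ltac:(lra)) as [K2 HK2].
  set (K := max K1 K2).
  destruct (proj1 (cv_eps _ _) (cv_csum f g K (fun k _ => Hcv k)) (eps / 4)%R ltac:(lra))
    as [N1 HN1].
  exists (max N1 K). intros N HN.
  specialize (HN1 N ltac:(lia)). specialize (HK1 K ltac:(lia)). specialize (HK2 K ltac:(lia)).
  assert (Htail : (Cmod (csum (f N) (S N) - csum (f N) K) <= SM - rsum M K)%R).
  { eapply Rle_trans; [apply Cmod_csum_sub_le; lia|].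
    pose proof (rsum_sub_le (fun k => Cmod (f N k)) M K (S N) ltac:(lia)
                  (fun k Hk => Hb N k ltac:(lia))).
    pose proof (rsum_le_series M SM (S N) HM0 HMS). lra. }
  apply Rabs_def2 in HK2.
  replace (csum (f N) (S N) - G) with ((csum (f N) (S N) - csum (f N) K)
    + (csum (f N) K - csum g K) + (csum g K - G)) by ring.
  pose proof (Cmod_triangle (csum (f N) (S N) - csum (f N) K + (csum (f N) K - csum g K))
                (csum g K - G)).
  pose proof (Cmod_triangle (csum (f N) (S N) - csum (f N) K) (csum (f N) K - csum g K)).
  lra.
Qed.

Lemma rsum_geom_le x n : (0 <= x < 1)%R -> (rsum (fun k => x ^ k)%R n <= / (1 - x))%R.
Proof.
  intros H. assert (E : (rsum (fun k => x ^ k)%R n * (1 - x) = 1 - x ^ n)%R).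
  { induction n as [|n IH]; simpl; [ring|]. rewrite Rmult_plus_distr_r, IH. ring. }
  assert (0 <= x ^ n)%R by (apply pow_le; lra).
  apply (Rmult_le_reg_r (1 - x)); [lra|]. rewrite E, Rinv_l by lra. lra.
Qed.

Lemma exp_le a b : (a <= b)%R -> (exp a <= exp b)%R.
Proof. intros [H|H]; [left; apply exp_increasing; auto|right; rewrite H; reflexivity]. Qed.

Lemma Cmod_one_sub_ge z : (1 - Cmod z <= Cmod (1 - z))%R.
Proof. pose proof (Cmod_triangle (1 - z) z). replace (1 - z + z) with (RtoC 1) in H by ring.
  rewrite Cmod_1 in H. lra. Qed.

Lemma one_sub_ge_exp y X : (0 <= y <= X)%R -> (X < 1)%R -> (exp (- (y / (1 - X))) <= 1 - y)%R.
Proof.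
  intros Hy HX. set (d := (y / (1 - X))%R).
  assert (Hd : (d * (1 - X) = y)%R) by (unfold d; field; lra).
  assert (0 <= d)%R by (unfold d; apply Rdiv_le_0_compat; lra).
  pose proof (exp_ineq1_le d). pose proof (exp_pos d).
  (* [(1 - y) (1 + d) = 1 + d (X - y) >= 1] *)
  assert (1 <= (1 - y) * exp d)%R by nra.
  rewrite exp_Ropp. apply (Rmult_le_reg_r (exp d)); [lra|]. rewrite Rinv_l; lra.
Qed.

Section Pochhammer_bounds.
Variables x Q : C.
Hypothesis HQ : (Cmod Q < 1)%R.

Let HQ0 : (0 <= Cmod Q)%R := Cmod_ge_0 Q.

Lemma qpoch_upper_bound n : (Cmod (qpoch x Q n) <= exp (Cmod x / (1 - Cmod Q)))%R.
Proof.
  assert (H : (Cmod (qpoch x Q n) <= exp (Cmod x * rsum (fun k => Cmod Q ^ k) n))%R).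
  { induction n as [|n IH]; simpl; [rewrite Cmod_1, Rmult_0_r, exp_0; lra|].
    rewrite Cmod_mult, Rmult_plus_distr_l, exp_plus.
    apply Rmult_le_compat; auto using Cmod_ge_0.
    eapply Rle_trans; [apply Cmod_triangle|].
    rewrite Cmod_opp, Cmod_1, Cmod_mult, Cmod_pow.
    eapply Rle_trans; [|apply exp_ineq1_le]. lra. }
  eapply Rle_trans; [apply H|]. apply exp_le.
  pose proof (rsum_geom_le (Cmod Q) n ltac:(lra)). unfold Rdiv.
  apply Rmult_le_compat_l; auto using Cmod_ge_0.
Qed.

Hypothesis Hx : (Cmod x < 1)%R.

Lemma qpoch_lower_bound n :
  (exp (- (Cmod x / (1 - Cmod x) / (1 - Cmod Q))) <= Cmod (qpoch x Q n))%R.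
Proof.
  set (d := (Cmod x / (1 - Cmod x))%R).
  assert (Hd : (0 <= d)%R) by (apply Rdiv_le_0_compat; [apply Cmod_ge_0|lra]).
  assert (H : (exp (- (d * rsum (fun k => Cmod Q ^ k) n)) <= Cmod (qpoch x Q n))%R).
  { induction n as [|n IH]; simpl; [rewrite Cmod_1, Rmult_0_r, Ropp_0, exp_0; lra|].
    rewrite Cmod_mult, Rmult_plus_distr_l, Ropp_plus_distr, exp_plus.
    apply Rmult_le_compat; try (left; apply exp_pos); auto.
    assert (Hy : (0 <= Cmod x * Cmod Q ^ n <= Cmod x)%R).
    { pose proof (Cmod_ge_0 x). pose proof (pow_le (Cmod Q) n HQ0).
      pose proof (Cmod_pow_le1 Q n ltac:(lra)). rewrite Cmod_pow in *. nra. }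
    eapply Rle_trans; [|apply Cmod_one_sub_ge]. rewrite Cmod_mult, Cmod_pow.
    eapply Rle_trans; [|apply (one_sub_ge_exp _ (Cmod x)); lra].
    apply exp_le. unfold d, Rdiv. nra. }
  eapply Rle_trans; [|apply H]. apply exp_le, Ropp_le_contravar.
  pose proof (rsum_geom_le (Cmod Q) n ltac:(lra)). unfold Rdiv.
  apply Rmult_le_compat_l; auto.
Qed.

End Pochhammer_bounds.

Lemma qpoch_cv x Q : (Cmod Q < 1)%R -> exists P, cv (qpoch x Q) P.
Proof.
  intros HQ. set (B := exp (Cmod x / (1 - Cmod Q))).
  set (d := fun n => qpoch x Q (S n) - qpoch x Q n).
  assert (Hd : forall n, (Cmod (d n) <= (B * Cmod x) * Cmod Q ^ n)%R).
  { intros n. unfold d. rewrite qpoch_S.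
    replace (qpoch x Q n * (1 - x * Q ^ n) - qpoch x Q n) with (- (qpoch x Q n * (x * Q ^ n)))
      by ring.
    rewrite Cmod_opp, !Cmod_mult, Cmod_pow, Rmult_assoc.
    apply Rmult_le_compat_r; [apply Rmult_le_pos; [apply Cmod_ge_0|apply pow_le, Cmod_ge_0]|].
    apply qpoch_upper_bound; auto. }
  destruct (ex_seriesC_le d _ Hd) as [D HD].
  { eexists. apply geom_series. split; [apply Cmod_ge_0|auto]. }
  exists (1 + D). apply is_seriesC_cv in HD.
  apply (filterlim_ext (fun n => 1 + csum d n)); [|apply cv_plus; auto using cv_const].
  intros n. induction n as [|n IH]; [simpl; ring|]. rewrite csum_last, Cplus_assoc, IH.
  unfold d. ring.
Qed.

Lemma qpoch_lim_neq0 x Q P : (Cmod x < 1)%R -> (Cmod Q < 1)%R -> cv (qpoch x Q) P -> P <> 0.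
Proof.
  intros Hx HQ H E. pose proof (cv_ge_bound _ _ _ H (qpoch_lower_bound x Q HQ Hx)) as Hc.
  rewrite E, Cmod_0 in Hc. pose proof (exp_pos (- (Cmod x / (1 - Cmod x) / (1 - Cmod Q)))).
  lra.
Qed.

Lemma Cmod_inv_qpoch_le x Q n : (Cmod x < 1)%R -> (Cmod Q < 1)%R ->
  (Cmod (/ qpoch x Q n) <= exp (Cmod x / (1 - Cmod x) / (1 - Cmod Q)))%R.
Proof.
  intros Hx HQ. rewrite Cmod_inv by (apply qpoch_neq0; lra).
  rewrite <- (Rinv_inv (exp _)), <- exp_Ropp.
  apply Rinv_le_contravar; [apply exp_pos|apply qpoch_lower_bound; auto].
Qed.

Lemma qbinom_bounded Q : (Cmod Q < 1)%R -> exists B, forall n k, (Cmod (qbinom Q n k) <= B)%R.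
Proof.
  intros HQ.
  set (B1 := exp (Cmod Q / (1 - Cmod Q))).
  set (B2 := exp (Cmod Q / (1 - Cmod Q) / (1 - Cmod Q))).
  exists (B1 * (B2 * B2))%R. intros n k. unfold qbinom. destruct (k <=? n)%nat.
  - assert (qpoch Q Q k <> 0) by (apply qpoch_neq0; lra).
    assert (qpoch Q Q (n - k) <> 0) by (apply qpoch_neq0; lra).
    replace (qpoch Q Q n / (qpoch Q Q k * qpoch Q Q (n - k)))
      with (qpoch Q Q n * (/ qpoch Q Q k * / qpoch Q Q (n - k))) by (field; auto).
    rewrite !Cmod_mult.
    apply Rmult_le_compat; auto using Cmod_ge_0, qpoch_upper_bound.
    + apply Rmult_le_pos; apply Cmod_ge_0.
    + apply Rmult_le_compat; auto using Cmod_ge_0, Cmod_inv_qpoch_le.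
  - rewrite Cmod_0. pose proof (exp_pos (Cmod Q / (1 - Cmod Q))).
    pose proof (exp_pos (Cmod Q / (1 - Cmod Q) / (1 - Cmod Q))).
    unfold B1, B2. apply Rmult_le_pos; [|apply Rmult_le_pos]; lra.
Qed.

Lemma qbinom_cv_central Q P d r : (Cmod Q < 1)%R -> cv (qpoch Q Q) P -> P <> 0 ->
  cv (fun N => qbinom Q (d + (N + N)) (d + (N + r))) (/ P).
Proof.
  intros HQ HP HP0.
  apply (filterlim_ext_loc (fun N => qpoch Q Q (d + (N + N))
                   * / (qpoch Q Q (d + (N + r)) * qpoch Q Q (N - r)))).
  { exists r. intros N HN. rewrite qbinom_le by lia.
    replace (d + (N + N) - (d + (N + r)))%nat with (N - r)%nat by lia. reflexivity. }
  replace (/ P) with (P * / (P * P)) by (field; auto).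
  apply cv_mult; [|apply cv_inv; [apply cv_mult|apply Cmult_neq_0; auto]];
    apply (cv_comp _ _ _ HP); intros K; exists (K + r)%nat; intros; lia.
Qed.

Lemma cv_weighted_sum (W : nat -> C) th (G : nat -> nat -> C) g (x A B : R) :
  (0 <= x < 1)%R -> (forall r, (Cmod (W r) <= A * x ^ r)%R) -> is_seriesC W th ->
  (forall N r, (Cmod (G N r) <= B)%R) -> (forall r, cv (fun N => G N r) g) ->
  cv (fun N => csum (fun r => W r * G N r) (S N)) (th * g).
Proof.
  intros Hx HW Hth HG Hcv.
  assert (HA : (0 <= A)%R)
    by (pose proof (HW 0%nat); pose proof (Cmod_ge_0 (W 0%nat)); simpl in *; lra).
  assert (HB : (0 <= B)%R)
    by (pose proof (HG 0%nat 0%nat); pose proof (Cmod_ge_0 (G 0%nat 0%nat)); lra).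
  destruct (tannery (fun N r => W r * G N r) (fun r => W r * g) (fun r => A * B * x ^ r)%R
              (A * B / (1 - x))%R) as [L [HL HLcv]].
  - intros r. apply Rmult_le_pos; [apply Rmult_le_pos|apply pow_le]; lra.
  - apply geom_series; auto.
  - intros N r _. rewrite Cmod_mult. replace (A * B * x ^ r)%R with (A * x ^ r * B)%R by ring.
    apply Rmult_le_compat; auto using Cmod_ge_0.
  - intros r. apply cv_scal, Hcv.
  - rewrite (is_seriesC_unique _ _ _ (is_seriesC_scal g W th Hth) HL). exact HLcv.
Qed.

Lemma Cmod_csum_geom_le f c x n : (0 <= x < 1)%R -> (0 <= c)%R ->
  (forall k, (k < n)%nat -> (Cmod (f k) <= c * x ^ k)%R) -> (Cmod (csum f n) <= c / (1 - x))%R.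
Proof.
  intros Hx Hc Hf. eapply Rle_trans; [apply Cmod_csum_le|].
  eapply Rle_trans; [apply (rsum_le _ (fun k => c * x ^ k)%R); auto|].
  apply rsum_le_series; [|apply geom_series; auto].
  intros k. apply Rmult_le_pos; [|apply pow_le]; lra.
Qed.

Lemma row_series (a : nat -> nat -> C) (K x : R) : (0 <= x < 1)%R ->
  (forall i j, (Cmod (a i j) <= K * x ^ i * x ^ j)%R) ->
  exists s : nat -> C,
    (forall i, is_seriesC (a i) (s i)) /\ (forall i, (Cmod (s i) <= K / (1 - x) * x ^ i)%R).
Proof.
  intros Hx Ha.
  assert (HK : (0 <= K)%R)
    by (pose proof (Ha 0%nat 0%nat); pose proof (Cmod_ge_0 (a 0%nat 0%nat)); simpl in *; lra).
  assert (Hs : forall i, exists si, is_seriesC (a i) si).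
  { intros i. apply (ex_seriesC_le (a i) (fun j => K * x ^ i * x ^ j)%R); auto.
    eexists. apply geom_series; auto. }
  exists (fun i => proj1_sig (constructive_indefinite_description _ (Hs i))).
  split; intros i; destruct (constructive_indefinite_description _ (Hs i)) as [si Hsi]; auto.
  apply (cv_le_bound _ _ _ 0%nat (proj1 (is_seriesC_cv _ _) Hsi)). intros n _.
  replace (K / (1 - x) * x ^ i)%R with (K * x ^ i / (1 - x))%R by (field; lra).
  apply Cmod_csum_geom_le; auto. apply Rmult_le_pos; [|apply pow_le]; lra.
Qed.

Theorem cv_convolution (a : nat -> nat -> C) (E : nat -> C) e (K B x : R) :
  (0 <= x < 1)%R -> (forall i j, (Cmod (a i j) <= K * x ^ i * x ^ j)%R) ->
  (forall m, (Cmod (E m) <= B)%R) -> cv E e ->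
  exists (s : nat -> C) (l : C), (forall i, is_seriesC (a i) (s i)) /\ is_seriesC s l /\
    cv (fun N => csum (fun i => csum (fun j => a i j * E (N - (i + j))%nat) (S (N - i))) (S N))
       (l * e).
Proof.
  intros Hx Ha HE He.
  assert (HB : (0 <= B)%R) by (pose proof (HE 0%nat); pose proof (Cmod_ge_0 (E 0%nat)); lra).
  assert (HK : (0 <= K)%R)
    by (pose proof (Ha 0%nat 0%nat); pose proof (Cmod_ge_0 (a 0%nat 0%nat)); simpl in *; lra).
  destruct (row_series a K x Hx Ha) as [s [Hs Hsb]].
  destruct (ex_seriesC_le s _ Hsb) as [l Hl]; [eexists; apply geom_series; auto|].
  exists s, l. split; [|split]; auto.
  assert (Hrow : forall i, cv (fun N => csum (fun j => a i j * E (N - j)%nat) (S N)) (s i * e)).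
  { intros i. apply (cv_weighted_sum (a i) (s i) (fun N j => E (N - j)%nat) e x (K * x ^ i) B);
      auto.
    intros j. apply (cv_comp _ _ _ He). intros M. exists (M + j)%nat. intros; lia. }
  destruct (tannery (fun N i => csum (fun j => a i j * E (N - (i + j))%nat) (S (N - i)))
              (fun i => s i * e) (fun i => B * (K / (1 - x)) * x ^ i)%R
              (B * (K / (1 - x)) / (1 - x))%R) as [L [HL HLcv]].
  - intros i. apply Rmult_le_pos; [apply Rmult_le_pos, Rdiv_le_0_compat|apply pow_le]; lra.
  - apply geom_series; auto.
  - intros N i _. replace (B * (K / (1 - x)) * x ^ i)%R with (B * K * x ^ i / (1 - x))%R
      by (field; lra).
    apply Cmod_csum_geom_le; auto.
    + apply Rmult_le_pos; [apply Rmult_le_pos|apply pow_le]; lra.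
    + intros j _. rewrite Cmod_mult.
      replace (B * K * x ^ i * x ^ j)%R with (K * x ^ i * x ^ j * B)%R by ring.
      apply Rmult_le_compat; auto using Cmod_ge_0.
  - intros i.
    apply (filterlim_ext (fun N => csum (fun j => a i j * E (N - i - j)%nat) (S (N - i)))).
    + intros N. apply csum_ext. intros j _. rewrite Nat.sub_add_distr. reflexivity.
    + apply (cv_comp (fun N => csum (fun j => a i j * E (N - j)%nat) (S N)) _ _ (Hrow i)).
      intros M. exists (M + i)%nat. intros; lia.
  - rewrite (is_seriesC_unique _ _ _ (is_seriesC_scal e s l Hl) HL). exact HLcv.
Qed.

Lemma abs_summable (a : nat -> nat -> C) (K x : R) : (0 <= x < 1)%R ->
  (forall i j, (Cmod (a i j) <= K * x ^ i * x ^ j)%R) ->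
  exists t : nat -> R, (forall i, is_series (fun j => Cmod (a i j)) (t i)) /\ ex_series t.
Proof.
  intros Hx Ha.
  assert (Hex : forall i, ex_series (fun j => Cmod (a i j))).
  { intros i. apply (ex_series_le (V := R_CompleteNormedModule) _ (fun j => K * x ^ i * x ^ j)%R).
    - intros j. change (Rabs (Cmod (a i j)) <= K * x ^ i * x ^ j)%R.
      rewrite Rabs_pos_eq by apply Cmod_ge_0. apply Ha.
    - eexists. apply geom_series; auto. }
  exists (fun i => Series (fun j => Cmod (a i j))). split; [intros i; apply Series_correct; auto|].
  apply (ex_series_le (V := R_CompleteNormedModule) _ (fun i => K / (1 - x) * x ^ i)%R).
  - intros i. change (Rabs (Series (fun j => Cmod (a i j))) <= K / (1 - x) * x ^ i)%R.
    pose proof (rsum_le_series _ _ 0 (fun j => Cmod_ge_0 (a i j)) (Series_correct _ (Hex i))).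
    rewrite Rabs_pos_eq by (simpl in *; lra).
    replace (K / (1 - x) * x ^ i)%R with (K * x ^ i / (1 - x))%R by (field; lra).
    rewrite <- (is_series_unique _ _ (geom_series (K * x ^ i) x Hx)).
    apply Series_le; [|eexists; apply geom_series; auto].
    intros j. split; [apply Cmod_ge_0|apply Ha].
  - eexists. apply geom_series; auto.
Qed.

Lemma triple_product_limit (Q v w : C) (x A : R) (d : nat) (W : nat -> C) th P1 P2 P3 :
  (Cmod Q < 1)%R -> (0 <= x < 1)%R -> (forall r, (Cmod (W r) <= A * x ^ r)%R) ->
  is_seriesC W th -> cv (qpoch (- v) Q) P1 -> cv (qpoch (- w) Q) P2 ->
  cv (qpoch Q Q) P3 -> P3 <> 0 ->
  (forall N, qpoch (- v) Q (d + N) * qpoch (- w) Q N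
             = csum (fun r => W r * qbinom Q (d + (N + N)) (d + (N + r))) (S N)) ->
  P1 * P2 = th * / P3.
Proof.
  intros HQ Hx HW Hth H1 H2 H3 H30 Hjtp.
  destruct (qbinom_bounded Q HQ) as [B HB].
  apply (cv_unique (fun N => qpoch (- v) Q (d + N) * qpoch (- w) Q N)).
  - apply cv_mult; auto. apply (cv_comp _ _ _ H1). intros M. exists M. intros; lia.
  - apply (filterlim_ext _ _ (fun N => eq_sym (Hjtp N))).
    apply (cv_weighted_sum W th _ _ x A B); auto.
    intros r. apply qbinom_cv_central; auto.
Qed.

Lemma bailey_limit (p : C) (x K A : R) (d : nat) (a : nat -> nat -> C) (W : nat -> C) th P :
  (Cmod p < 1)%R -> (0 <= x < 1)%R ->
  (forall i j, (Cmod (a i j) <= K * x ^ i * x ^ j)%R) ->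
  (forall r, (Cmod (W r) <= A * x ^ r)%R) -> is_seriesC W th ->
  cv (qpoch p p) P -> P <> 0 ->
  (forall N, csum (fun i => csum (fun j => a i j / qpoch p p (N - (i + j))) (S (N - i))) (S N)
             = csum (fun r => W r / (qpoch p p (N - r) * qpoch p p (d + (N + r)))) (S N)) ->
  exists s : nat -> C, (forall i, is_seriesC (a i) (s i)) /\ is_seriesC s (th / P).
Proof.
  intros Hp Hx Ha HW Hth HP HP0 Hbailey.
  set (c := exp (Cmod p / (1 - Cmod p) / (1 - Cmod p))).
  assert (Hc : forall n, (Cmod (/ qpoch p p n) <= c)%R) by (intros; apply Cmod_inv_qpoch_le; auto).
  assert (HE : cv (fun n => / qpoch p p n) (/ P)) by (apply cv_inv; auto).
  destruct (cv_convolution a (fun n => / qpoch p p n) (/ P) K c x Hx Ha Hc HE)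
    as [s [l [Hs [Hl HL]]]].
  assert (Hl' : l * / P = th * (/ P * / P)).
  { apply (cv_unique _ _ _ HL).
    apply (filterlim_ext (fun N => csum (fun r => W r
             * (/ qpoch p p (N - r) * / qpoch p p (d + (N + r)))) (S N))).
    { intros N.
      transitivity (csum (fun r => W r / (qpoch p p (N - r) * qpoch p p (d + (N + r)))) (S N)).
      - apply csum_ext. intros r _. field. split; apply qpoch_neq0; lra.
      - rewrite <- Hbailey. reflexivity. }
    apply (cv_weighted_sum W th _ _ x A (c * c)); auto.
    - intros N r. rewrite Cmod_mult. apply Rmult_le_compat; auto using Cmod_ge_0.
    - intros r. apply cv_mult.
      + apply (cv_comp _ _ _ HE). intros M. exists (M + r)%nat. intros; lia.
      + apply (cv_comp _ _ _ HE). intros M. exists M. intros; lia. }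
  exists s. split; auto.
  replace (th / P) with l; auto.
  transitivity (l * / P * P); [field; auto|]. rewrite Hl'. field. auto.
Qed.

Theorem product_formula_of_finite_identities (p Q v w : C) (x K A : R) (d : nat)
    (a : nat -> nat -> C) (W : nat -> C) :
  (Cmod p < 1)%R -> (Cmod Q < 1)%R -> (0 <= x < 1)%R ->
  (forall i j, (Cmod (a i j) <= K * x ^ i * x ^ j)%R) ->
  (forall r, (Cmod (W r) <= A * x ^ r)%R) ->
  (forall N, csum (fun i => csum (fun j => a i j / qpoch p p (N - (i + j))) (S (N - i))) (S N)
             = csum (fun r => W r / (qpoch p p (N - r) * qpoch p p (d + (N + r)))) (S N)) ->
  (forall N, qpoch (- v) Q (d + N) * qpoch (- w) Q N
             = csum (fun r => W r * qbinom Q (d + (N + N)) (d + (N + r))) (S N)) ->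
  exists P1 P2 P3 P4 : C,
    is_qpoch_inf (- v) Q P1 /\ is_qpoch_inf (- w) Q P2 /\
    is_qpoch_inf Q Q P3 /\ is_qpoch_inf p p P4 /\
    is_double_seriesC a (P1 * P2 * P3 / P4).
Proof.
  intros Hp HQ Hx Ha HW Hbailey Hjtp.
  destruct (qpoch_cv (- v) Q HQ) as [P1 H1].
  destruct (qpoch_cv (- w) Q HQ) as [P2 H2].
  destruct (qpoch_cv Q Q HQ) as [P3 H3].
  destruct (qpoch_cv p p Hp) as [P4 H4].
  pose proof (qpoch_lim_neq0 Q Q P3 HQ HQ H3) as H30.
  pose proof (qpoch_lim_neq0 p p P4 Hp Hp H4) as H40.
  destruct (ex_seriesC_le W (fun r => A * x ^ r)%R HW) as [th Hth].
  { eexists. apply geom_series; auto. }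
  pose proof (triple_product_limit Q v w x A d W th P1 P2 P3 HQ Hx HW Hth H1 H2 H3 H30 Hjtp)
    as HP12.
  destruct (bailey_limit p x K A d a W th P4 Hp Hx Ha HW Hth H4 H40 Hbailey) as [s [Hs Hl]].
  exists P1, P2, P3, P4. repeat split; auto.
  exists s. split; [exact Hs|]. split; [|exact (abs_summable a K x Hx Ha)].
  replace (P1 * P2 * P3 / P4) with (th / P4); auto.
  rewrite HP12. field. auto.
Qed.

Lemma Cmod_pow_le_pow (q : C) e r :
  (Cmod q <= 1)%R -> (r <= e)%nat -> (Cmod (q ^ e) <= Cmod q ^ r)%R.
Proof.
  intros Hq Hre. rewrite Cmod_pow. replace e with (r + (e - r))%nat by lia. rewrite pow_add.
  pose proof (pow_le (Cmod q) r (Cmod_ge_0 q)) as Hr.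
  pose proof (Cmod_pow_le1 q (e - r) Hq) as He. rewrite Cmod_pow in He. nra.
Qed.

Lemma summand_bounded (q p : C) (e : nat -> nat -> nat) (m : nat -> nat) :
  (Cmod q < 1)%R -> (Cmod p < 1)%R -> (forall i j, (i + j <= e i j)%nat) ->
  exists K, forall i j,
    (Cmod (q ^ e i j / (qpoch q q (m i) * qpoch p p j)) <= K * Cmod q ^ i * Cmod q ^ j)%R.
Proof.
  intros Hq Hp He.
  set (c1 := exp (Cmod q / (1 - Cmod q) / (1 - Cmod q))).
  set (c2 := exp (Cmod p / (1 - Cmod p) / (1 - Cmod p))).
  exists (c1 * c2)%R. intros i j.
  assert (qpoch q q (m i) <> 0) by (apply qpoch_neq0; lra).
  assert (qpoch p p j <> 0) by (apply qpoch_neq0; lra).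
  replace (q ^ e i j / (qpoch q q (m i) * qpoch p p j))
    with (q ^ e i j * (/ qpoch q q (m i) * / qpoch p p j)) by (field; auto).
  rewrite !Cmod_mult.
  replace (c1 * c2 * Cmod q ^ i * Cmod q ^ j)%R with (Cmod q ^ (i + j) * (c1 * c2))%R
    by (rewrite pow_add; ring).
  apply Rmult_le_compat.
  - apply Cmod_ge_0.
  - apply Rmult_le_pos; apply Cmod_ge_0.
  - apply Cmod_pow_le_pow; [lra|apply He].
  - apply Rmult_le_compat; auto using Cmod_ge_0, Cmod_inv_qpoch_le.
Qed.

Lemma Cmod_theta_term_le (q : C) e t f r : (Cmod q < 1)%R -> (r <= e)%nat ->
  (Cmod (q ^ e * (q ^ 12) ^ t * (1 + q ^ f)) <= 2 * Cmod q ^ r)%R.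
Proof.
  intros Hq Hre. rewrite !Cmod_mult.
  assert (Hqe : (Cmod (q ^ e) <= Cmod q ^ r)%R) by (apply Cmod_pow_le_pow; [lra|auto]).
  assert (HQ : (Cmod ((q ^ 12) ^ t) <= 1)%R) by (apply Cmod_pow_le1, Cmod_pow_le1; lra).
  assert (H1 : (Cmod (1 + q ^ f) <= 2)%R).
  { pose proof (Cmod_triangle 1 (q ^ f)). pose proof (Cmod_pow_le1 q f ltac:(lra)).
    rewrite Cmod_1 in *. lra. }
  apply Rle_trans with (Cmod q ^ r * 1 * 2)%R; [|lra].
  apply Rmult_le_compat; auto using Cmod_ge_0.
  - apply Rmult_le_pos; apply Cmod_ge_0.
  - apply Rmult_le_compat; auto using Cmod_ge_0.
Qed.

Lemma theta1_bounded q r : (Cmod q < 1)%R -> (Cmod (theta1 q r) <= 2 * Cmod q ^ r)%R.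
Proof.
  intros Hq. destruct r as [|r]; [simpl; rewrite Cmod_1; lra|].
  apply Cmod_theta_term_le; auto. lia.
Qed.

Lemma theta2_bounded q r : (Cmod q < 1)%R -> (Cmod (theta2 q r) <= 2 * Cmod q ^ r)%R.
Proof. intros Hq. apply Cmod_theta_term_le; auto. lia. Qed.

Theorem theorem3p1 (q : C) (hq : (Cmod q < 1)%R) :
  (exists P1 P2 P3 P4 : C,
     is_qpoch_inf (- q ^ 5) (q ^ 12) P1 /\
     is_qpoch_inf (- q ^ 7) (q ^ 12) P2 /\
     is_qpoch_inf (q ^ 12) (q ^ 12) P3 /\
     is_qpoch_inf (q ^ 2) (q ^ 2) P4 /\
     is_double_seriesC
       (fun i j => q ^ (4 * i * i + 4 * i * j + 2 * j * j)
                   / (qpoch q q (2 * i) * qpoch (q ^ 2) (q ^ 2) j))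
       (P1 * P2 * P3 / P4)) /\
  (exists P1 P2 P3 P4 : C,
     is_qpoch_inf (- q) (q ^ 12) P1 /\
     is_qpoch_inf (- q ^ 11) (q ^ 12) P2 /\
     is_qpoch_inf (q ^ 12) (q ^ 12) P3 /\
     is_qpoch_inf (q ^ 2) (q ^ 2) P4 /\
     is_double_seriesC
       (fun i j => q ^ (4 * i * i + 4 * i * j + 2 * j * j + 4 * i + 2 * j)
                   / (qpoch q q (2 * i + 1) * qpoch (q ^ 2) (q ^ 2) j))
       (P1 * P2 * P3 / P4)).
Proof.
  assert (Hpq : q ^ 2 = q * q) by (simpl; ring).
  assert (Hp : (Cmod (q ^ 2) < 1)%R) by (apply Cmod_pow_lt1; [auto|lia]).
  assert (HQ : (Cmod (q ^ 12) < 1)%R) by (apply Cmod_pow_lt1; [auto|lia]).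
  assert (Hx : (0 <= Cmod q < 1)%R) by (split; [apply Cmod_ge_0|auto]).
  destruct (summand_bounded q (q ^ 2) (fun i j => 4 * i * i + 4 * i * j + 2 * j * j)%nat
              (fun i => 2 * i)%nat hq Hp ltac:(intros i j; cbv beta; nia)) as [K1 HK1].
  destruct (summand_bounded q (q ^ 2)
              (fun i j => 4 * i * i + 4 * i * j + 2 * j * j + 4 * i + 2 * j)%nat
              (fun i => 2 * i + 1)%nat hq Hp ltac:(intros i j; cbv beta; nia)) as [K2 HK2].
  split.
  - apply (product_formula_of_finite_identities _ _ _ _ (Cmod q) K1 2 0 _ (theta1 q)); auto.
    + intros r. apply theta1_bounded; auto.
    + exact (finite_identity1 q (q ^ 2) Hpq hq).
    + exact (finite_product1 q hq).
  - apply (product_formula_of_finite_identities _ _ _ _ (Cmod q) K2 2 1 _ (theta2 q)); auto.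
    + intros r. apply theta2_bounded; auto.
    + exact (finite_identity2 q (q ^ 2) Hpq hq).
    + exact (finite_product2 q hq).
Qed.
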